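(* Let $R_1,R_2$ be discrete valuation domains with maximal ideals $P_1=R_1p_1$ and $P_2=R_2p_2$, let $\overline{R}$ be a field, $\mathcal{V}_i:R_i\to\overline{R}$ surjective ring homomorphisms with $\ker\mathcal{V}_i=P_i$, and $R=\{(r_1,r_2)\in R_1\times R_2:\mathcal{V}_1(r_1)=\mathcal{V}_2(r_2)\}$. Let $S$ be a non-zero separated $R$-module, and let $S_1=S/P_2S$ and $S_2=S/P_1S$. Then $S$ is a pseudo-absorbing primary multiplication $R$-module if and only if $S_1$ is a pseudo-absorbing primary multiplication $R_1$-module and $S_2$ is a pseudo-absorbing primary multiplication $R_2$-module.
   Context: $R$ is local with maximal ideal $P=P_1\oplus P_2=\{(a,b):a\in P_1,b\in P_2\}$. For an $R$-module $S$, $P_1S$ means $(P_1\oplus0)S$ with $P_1\oplus0=\{(a,0):a\in P_1\}$ and $P_2S$ means $(0\oplus P_2)S$ with $0\oplus P_2=\{(0,b):b\in P_2\}$. $S$ is separated if $P_1S\cap P_2S=0$. Since $R/(0\oplus P_2)\cong R_1$ and $R/(P_1\oplus0)\cong R_2$, $S_1=S/P_2S$ is an $R_1$-module and $S_2=S/P_1S$ is an $R_2$-module. A proper ideal $I$ of a commutative ring $A$ is 2-absorbing primary if whenever $a,b,c\in A$ and $abc\in I$ then $ab\in I$ or $ac\in\sqrt I$ or $bc\in\sqrt I$. A proper submodule $N$ of an $A$-module $M$ is pseudo-absorbing primary if $(N:_AM)=\{r\in A:rM\subseteq N\}$ is a 2-absorbing primary ideal of $A$. $M$ is a pseudo-absorbing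 primary multiplication $A$-module if for every pseudo-absorbing primary submodule $N$ of $M$ there is an ideal $I$ of $A$ with $N=IM$. *)

From HB Require Import structures.
From mathcomp Require Import all_boot all_order all_algebra.
Set Implicit Arguments. Unset Strict Implicit. Unset Printing Implicit Defensive.
Import Order.TTheory GRing.Theory Num.Theory.
Local Open Scope ring_scope.

Section RingNotions.
Variable A : comNzRingType.

Definition is_ideal (I : A -> Prop) : Prop :=
  [/\ I 0, (forall x y, I x -> I y -> I (x + y)) & (forall r x, I x -> I (r * x))].

Definition proper_ideal (I : A -> Prop) : Prop := is_ideal I /\ ~ I 1.

Definition rad (I : A -> Prop) : A -> Prop := fun r => exists n : nat, I (r ^+ n).

Definition two_absorbing_primary (I : A -> Prop) : Prop :=
  proper_ideal I /\
  forall a b c, I (a * b * c) -> [\/ I (a * b), rad I (a * c) | rad I (b * c)].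

Definition principal (p : A) : A -> Prop := fun x => exists y, x = y * p.

Definition maximal_ideal (M : A -> Prop) : Prop :=
  proper_ideal M /\
  forall J, is_ideal J -> (forall x, M x -> J x) -> (forall x, J x <-> M x) \/ J 1.
End RingNotions.

Definition is_PID (D : idomainType) : Prop :=
  forall I : D -> Prop, is_ideal I -> exists a : D, forall x, I x <-> principal a x.

Definition is_DVD (D : idomainType) : Prop :=
  [/\ is_PID D,
      (exists M : D -> Prop, maximal_ideal M /\ exists x, M x /\ x != 0) &
      (forall M M' : D -> Prop, maximal_ideal M -> maximal_ideal M' ->
         forall x, M x <-> M' x)].

Section ModuleNotions.
Variables (A : comNzRingType) (M : lmodType A).

Definition is_submodule (N : M -> Prop) : Prop :=
  [/\ N 0, (forall x y, N x -> N y -> N (x + y)) & (forall (r : A) x, N x -> N (r *: x))].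

Definition proper_submodule (N : M -> Prop) : Prop :=
  is_submodule N /\ exists m, ~ N m.

Definition colon (N : M -> Prop) : A -> Prop := fun r => forall m : M, N (r *: m).

Definition idealmul (I : A -> Prop) : M -> Prop :=
  fun x => exists (n : nat) (r : 'I_n -> A) (m : 'I_n -> M),
    (forall i, I (r i)) /\ x = \sum_(i < n) r i *: m i.

Definition pseudo_absorbing_primary (N : M -> Prop) : Prop :=
  proper_submodule N /\ two_absorbing_primary (colon N).

Definition pap_multiplication_module : Prop :=
  forall N : M -> Prop, pseudo_absorbing_primary N ->
    exists I : A -> Prop, is_ideal I /\ forall x, N x <-> idealmul I x.
End ModuleNotions.

Arguments pap_multiplication_module A M : clear implicits.

Section Pullback.
Variables (R1 R2 : comNzRingType) (F : fieldType)
          (V1 : {rmorphism R1 -> F}) (V2 : {rmorphism R2 -> F}).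

Definition pb_pred : {pred R1 * R2} := fun x => V1 x.1 == V2 x.2.

Fact pb_closed : subring_closed pb_pred.
Proof.
split; rewrite /pb_pred /in_mem /=.
- by rewrite !rmorph1.
- move=> [x1 x2] [y1 y2] /eqP /= e1 /eqP /= e2.
  by apply/eqP; rewrite /= !rmorphB e1 e2.
- move=> [x1 x2] [y1 y2] /eqP /= e1 /eqP /= e2.
  by apply/eqP; rewrite /= !rmorphM e1 e2.
Qed.

HB.instance Definition _ := GRing.isSubringClosed.Build _ pb_pred pb_closed.

Record pullback := Pullback { pbval : R1 * R2; _ : pbval \in pb_pred }.
HB.instance Definition _ := [isSub for pbval].
HB.instance Definition _ := [Choice of pullback by <:].
HB.instance Definition _ := [SubChoice_isSubComNzRing of pullback by <:].

Definition P1_0 (p1 : R1) : pullback -> Prop :=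
  fun r => principal p1 (pbval r).1 /\ (pbval r).2 = 0.
Definition O_P2 (p2 : R2) : pullback -> Prop :=
  fun r => (pbval r).1 = 0 /\ principal p2 (pbval r).2.
End Pullback.
Arguments P1_0 {R1 R2 F} V1 V2 p1.
Arguments O_P2 {R1 R2 F} V1 V2 p2.

Definition separated (R1 R2 : comNzRingType) (F : fieldType)
  (V1 : {rmorphism R1 -> F}) (V2 : {rmorphism R2 -> F}) (p1 : R1) (p2 : R2)
  (S : lmodType (pullback V1 V2)) : Prop :=
  forall x : S, idealmul (P1_0 V1 V2 p1) x -> idealmul (O_P2 V1 V2 p2) x -> x = 0.

(* pi : S -> T presents T (a B-module) as the quotient S / N, where the
   pullback acts on T through the ring map act : pullback -> B. *)
Definition quotient_presentation (A B : comNzRingType) (act : A -> B)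
  (S : lmodType A) (T : lmodType B) (N : S -> Prop) (pi : S -> T) : Prop :=
  [/\ (forall x y, pi (x + y) = pi x + pi y),
      (forall t, exists x, pi x = t),
      (forall x, pi x = 0 <-> N x) &
      (forall (a : A) x, pi (a *: x) = act a *: pi x)].
Arguments quotient_presentation {A B} act S T N pi.
Arguments separated {R1 R2 F V1 V2} p1 p2 S.

From Pilot Require Import Defs.
From HB Require Import structures.
From mathcomp Require Import all_boot all_order all_algebra.
From mathcomp Require Import ring.
From Stdlib Require Import Classical IndefiniteDescription.
Import GRing.Theory.
Local Open Scope ring_scope.

(* Over a discrete valuation domain D with maximal ideal Dp every non-zero
   element is p^n times a unit, so every proper ideal of D is 2-absorbing
   primary and a pseudo-absorbing primary multiplication D-module M writes each
   of its proper submodules as IM.  Hence M = pM forces M = 0, and M = Dx as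
   soon as x lies outside pM.  Pseudo-absorbing primary multiplication modules
   pass to quotients along surjective ring maps, which gives the direct
   implication.  Conversely, separatedness embeds S into S_1 x S_2 and rules
   out S_i = p_i S_i, so some s in S has images outside p_1 S_1 and p_2 S_2;
   these images generate S_1 and S_2, lifting coefficients through the
   pullback gives S = Rs, and cyclic modules are multiplication modules. *)

Section Ideals.
Context {A : comNzRingType}.

Lemma is_ideal_principal (a : A) : is_ideal (principal a).
Proof.
split=> [|_ _ [u ->] [v ->]|r _ [u ->]]; first by exists 0; rewrite mul0r.
- by exists (u + v); rewrite mulrDl.
- by exists (r * u); rewrite mulrA.
Qed.

Lemma principal_refl (a : A) : principal a a.
Proof. by exists 1; rewrite mul1r. Qed.

Lemma principal_trans {a b c : A} : principal a b -> principal b c -> principal a c.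
Proof. by move=> [x ->] [y ->]; exists (y * x); rewrite mulrA. Qed.

Lemma two_absorbing_primary_preimage (B : comNzRingType) (f : {rmorphism A -> B})
    (I : A -> Prop) (J : B -> Prop) :
  (forall a, I a <-> J (f a)) -> two_absorbing_primary J -> two_absorbing_primary I.
Proof.
move=> IE [[[J0 JD JM] J1] J2]; split.
  split; first split=> [|x y /IE Jx /IE Jy|r x /IE Jx].
  - by apply/IE; rewrite rmorph0.
  - by apply/IE; rewrite rmorphD; apply: JD.
  - by apply/IE; rewrite rmorphM; apply: JM.
  - by move/IE; rewrite rmorph1.
move=> a b c /IE; rewrite !rmorphM => /J2[h|[n h]|[n h]].
- by constructor 1; apply/IE; rewrite rmorphM.
- by constructor 2; exists n; apply/IE; rewrite rmorphXn rmorphM.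
- by constructor 3; exists n; apply/IE; rewrite rmorphXn rmorphM.
Qed.

Lemma is_ideal_image (B : comNzRingType) (f : {rmorphism A -> B}) (I : A -> Prop) :
  (forall b, exists a, f a = b) -> is_ideal I ->
  is_ideal (fun b => exists2 a, I a & f a = b).
Proof.
move=> f_surj [I0 ID IM]; split=> [|_ _ [a Ia <-] [b Ib <-]|r _ [a Ia <-]].
- by exists 0; rewrite ?rmorph0.
- by exists (a + b); [apply: ID | rewrite rmorphD].
- by have [r' <-] := f_surj r; exists (r' * a); [apply: IM | rewrite rmorphM].
Qed.

End Ideals.

Lemma principal1_unit (R : comUnitRingType) (u : R) :
  principal u 1 <-> u \is a GRing.unit.
Proof.
split=> [[y yu]|u_unit]; last by exists u^-1; rewrite mulVr.
by apply/unitrPr; exists y; rewrite mulrC -yu.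
Qed.

Lemma PID_principal_maximal {D : idomainType} (Q : D -> Prop) (a : D) :
  is_PID D -> Q a ->
  exists2 t, Q t & forall c, Q c -> principal c t -> principal t c.
Proof.
(* Otherwise dependent choice yields a strictly ascending chain of principal
   ideals, and the generator of their union already lies in one of them. *)
move=> D_PID Qa; apply: NNPP => no_max.
have step t : exists c, Q t -> [/\ Q c, principal c t & ~ principal t c].
  case: (classic (Q t)) => [Qt|nQt]; last by exists t.
  apply: NNPP => no_c; apply: no_max; exists t => // c Qc ct.
  by apply: NNPP => tc; apply: no_c; exists c.
have [f hf] := functional_choice _ step.
pose y n := iter n f a.
have Qy n : Q (y n) by elim: n => //= n ih; case: (hf _ ih).
have y_step n : principal (y n.+1) (y n) by case: (hf _ (Qy n)).
have y_mono k n z : principal (y n) z -> principal (y (k + n)%N) z.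
  by elim: k => // k ih /ih; apply: principal_trans (y_step _).
pose U z := exists n, principal (y n) z.
have U_ideal : is_ideal U.
  split=> [|u v [n hu] [m hv]|r u [n hu]]; first by exists 0%N; exists 0; rewrite mul0r.
  - exists (m + n)%N; have [_ addP _] := is_ideal_principal (y (m + n)%N).
    by apply: addP; [apply: y_mono | rewrite addnC; apply: y_mono].
  - by exists n; have [_ _ IM] := is_ideal_principal (y n); apply: IM.
have [b hb] := D_PID U U_ideal.
have [n bn] : U b by apply/hb; apply: principal_refl.
have bSn : principal b (y n.+1) by apply/hb; exists n.+1; apply: principal_refl.
by have [_ _] := hf _ (Qy n); apply; apply: principal_trans bn bSn.
Qed.

Section Modules.
Context {A : comNzRingType} {M : lmodType A}.

Definition divisible (q : A) (m : M) : Prop := exists m', m = q *: m'.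

Definition cyclic_span (x m : M) : Prop := exists d, m = d *: x.

Lemma is_submodule_divisible q : is_submodule (divisible q).
Proof.
split=> [|_ _ [u ->] [v ->]|r _ [u ->]]; first by exists 0; rewrite scaler0.
- by exists (u + v); rewrite scalerDr.
- by exists (r *: u); rewrite !scalerA mulrC.
Qed.

Lemma is_submodule_cyclic_span x : is_submodule (cyclic_span x).
Proof.
split=> [|_ _ [d ->] [e ->]|r _ [d ->]]; first by exists 0; rewrite scale0r.
- by exists (d + e); rewrite scalerDl.
- by exists (r * d); rewrite scalerA.
Qed.

Lemma divisible_expr {q : A} :
  (forall m, divisible q m) -> forall n m, divisible (q ^+ n) m.
Proof.
move=> qM; elim=> [|n ih] m; first by exists m; rewrite expr0 scale1r.
have [m1 ->] := ih m; have [m2 ->] := qM m1.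
by exists m2; rewrite scalerA -exprSr.
Qed.

Lemma colon_proper (N : M -> Prop) : proper_submodule N -> Defs.proper_ideal (colon N).
Proof.
case=> [[N0 ND NZ] [m Nm]]; split; first split => [x|a b ha hb x|r a ha x].
- by rewrite scale0r.
- by rewrite scalerDl; apply: ND.
- by rewrite -scalerA; apply: NZ.
- by move/(_ m); rewrite scale1r.
Qed.

Lemma idealmul_scale (I : A -> Prop) a (m : M) : I a -> idealmul I (a *: m).
Proof. by exists 1%N, (fun=> a), (fun=> m); rewrite big_ord1. Qed.

Lemma idealmul_submodule (I : A -> Prop) (N : M -> Prop) :
  is_submodule N -> (forall a m, I a -> N (a *: m)) -> forall x, idealmul I x -> N x.
Proof.
by case=> N0 ND _ IN _ [n [r [m [Ir ->]]]]; apply: big_ind => // i _; apply: IN.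
Qed.

Lemma idealmul_divisible {I : A -> Prop} {q : A} {x : M} :
  (forall a, I a -> principal q a) -> idealmul I x -> divisible q x.
Proof.
move=> Iq; apply: idealmul_submodule; first exact: is_submodule_divisible.
by move=> a m /Iq [y ->]; exists (y *: m); rewrite scalerA mulrC.
Qed.

Lemma cyclic_pap_multiplication (s0 : M) :
  (forall s, cyclic_span s0 s) -> pap_multiplication_module A M.
Proof.
move=> gen N [[[N0 ND NZ] _] _]; exists (fun r => N (r *: s0)); split.
  split=> [|a b ha hb|r a ha]; first by rewrite scale0r.
  - by rewrite scalerDl; apply: ND.
  - by rewrite -scalerA; apply: NZ.
move=> x; split=> [|]; first by have [r ->] := gen x; apply: idealmul_scale.
apply: idealmul_submodule => // a m Na; have [c ->] := gen m.
by rewrite scalerA mulrC -scalerA; apply: NZ.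
Qed.

End Modules.

Section DVD.
Context {D : idomainType} {p : D}.
Hypotheses (D_DVD : is_DVD D) (p_maximal : maximal_ideal (principal p)).

Lemma DVD_PID : is_PID D.
Proof. by case: D_DVD. Qed.

Lemma DVD_p_not1 : ~ principal p 1.
Proof. by case: p_maximal => [[]]. Qed.

Lemma DVD_maximalE {J : D -> Prop} : maximal_ideal J -> forall x, J x <-> principal p x.
Proof. by case: D_DVD => _ _ uniq J_maximal; apply: uniq. Qed.

Lemma DVD_local u : ~ principal p u -> u \is a GRing.unit.
Proof.
move=> npu; apply/negPn/negP => u_nunit.
have [t [t_nunit tu] t_max] := PID_principal_maximal
  (fun t => t \isn't a GRing.unit /\ principal t u) u DVD_PID
  (conj u_nunit (principal_refl u)).
have t_maximal : maximal_ideal (principal t).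
  split; first split; first exact: is_ideal_principal.
    by move/principal1_unit; apply/negP.
  move=> J J_ideal tJ; have [c hc] := DVD_PID _ J_ideal.
  have ct : principal c t by apply/hc/tJ/principal_refl.
  have [c_unit|c_nunit] := boolP (c \is a GRing.unit).
    by right; apply/hc/principal1_unit.
  left=> x; split=> [/hc cx|/tJ //].
  exact: principal_trans (t_max c (conj c_nunit (principal_trans ct tu)) ct) cx.
by apply: npu; apply/(DVD_maximalE t_maximal).
Qed.

Lemma DVD_expr_unit {y : D} : y != 0 -> exists n u, y = p ^+ n * u /\ u \is a GRing.unit.
Proof.
move=> y_neq0; have y_p0 : exists n, y = p ^+ n * y by exists 0%N; rewrite mul1r.
have [t [n yE] t_max] := PID_principal_maximal
  (fun t => exists n, y = p ^+ n * t) y DVD_PID y_p0.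
exists n, t; split=> //; apply: DVD_local => -[c tE].
have [w cE] : principal t c.
  by apply: t_max; [exists n.+1; rewrite yE tE exprSr; ring | exists p; rewrite tE mulrC].
have : c * (1 - w * p) = 0 by rewrite mulrBr mulr1 {1}cE tE; ring.
move/eqP; rewrite mulf_eq0 subr_eq0 => /orP[/eqP c0|/eqP oneE].
  by move: y_neq0; rewrite yE tE c0 mul0r mulr0 eqxx.
by apply: DVD_p_not1; exists w.
Qed.

Lemma DVD_rad_principal (J : D -> Prop) a z :
  is_ideal J -> J a -> a != 0 -> principal p z -> Defs.rad J z.
Proof.
move=> [_ _ JM] Ja a_neq0 [y ->]; have [n [u [aE u_unit]]] := DVD_expr_unit a_neq0.
exists n; have pnE : p ^+ n = u^-1 * a by rewrite aE mulrCA mulVr // mulr1.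
by rewrite exprMn pnE mulrA; apply: JM.
Qed.

Lemma DVD_two_absorbing_primary (J : D -> Prop) :
  Defs.proper_ideal J -> two_absorbing_primary J.
Proof.
move=> J_proper; split=> //; case: J_proper => J_ideal _ a b c abc.
have [J0 _ JM] := J_ideal.
have [c_unit|c_nunit] := boolP (c \is a GRing.unit).
  by constructor 1; rewrite -(mulKr c_unit (a * b)) [c * _]mulrC; apply: JM.
have [y cE] : principal p c by apply: NNPP => /DVD_local; apply/negP.
have [[x Jx x_neq0]|J_eq0] := classic (exists2 x, J x & x != 0).
  constructor 2; apply: DVD_rad_principal J_ideal Jx x_neq0 _.
  by exists (a * y); rewrite cE mulrA.
have /eqP : a * b * c = 0.
  by apply: NNPP => /eqP abc_neq0; apply: J_eq0; exists (a * b * c).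
rewrite mulf_eq0 => /orP[/eqP ab0|/eqP c0]; first by constructor 1; rewrite ab0.
by constructor 2; exists 1%N; rewrite c0 mulr0 expr1.
Qed.

Context {M : lmodType D}.

Lemma DVD_pap_cyclic_span {x m : M} :
  pap_multiplication_module D M -> ~ cyclic_span x m ->
  exists I, forall z, cyclic_span x z <-> idealmul I z.
Proof.
move=> M_pap nxm.
have xD_proper : proper_submodule (cyclic_span x).
  by split; [apply: is_submodule_cyclic_span | exists m].
have [|I [_ hI]] := M_pap (cyclic_span x); last by exists I.
by split=> //; apply/DVD_two_absorbing_primary/colon_proper.
Qed.

Lemma DVD_pap_cyclic (x : M) :
  pap_multiplication_module D M -> ~ divisible p x -> forall m, cyclic_span x m.
Proof.
move=> M_pap nx m; apply: NNPP => nxm.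
have [I hI] := DVD_pap_cyclic_span M_pap nxm.
have Ix : idealmul I x by apply/hI; exists 1; rewrite scale1r.
have [[a Ia /DVD_local a_unit]|Ip] :=
  classic (exists2 a, I a & ~ principal p a); last first.
  apply: nx; apply: (idealmul_divisible _ Ix) => a Ia.
  by apply: NNPP => npa; apply: Ip; exists a.
apply/nxm/hI; rewrite -[m]scale1r -(divrr a_unit) -scalerA.
exact: idealmul_scale.
Qed.

Lemma DVD_pap_divisible_eq0 :
  pap_multiplication_module D M -> (forall m : M, divisible p m) -> forall x : M, x = 0.
Proof.
move=> M_pap pM x; apply: NNPP => x_neq0.
have [[m nxm]|no_m] := classic (exists m, ~ cyclic_span x m); last first.
  have gen m : cyclic_span x m by apply: NNPP => nxm; apply: no_m; exists m.
  have [m' xE] := pM x; have [d m'E] := gen m'.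
  have pd_unit : 1 - p * d \is a GRing.unit.
    apply: DVD_local => -[y yE]; apply: DVD_p_not1; exists (y + d).
    by rewrite mulrDl -yE mulrC subrK.
  have pdx0 : (1 - p * d) *: x = 0.
    by rewrite scalerBl scale1r {1}xE m'E scalerA subrr.
  by apply: x_neq0; rewrite -[x]scale1r -(mulVr pd_unit) -scalerA pdx0 scaler0.
have [I hI] := DVD_pap_cyclic_span M_pap nxm.
have Ix : idealmul I x by apply/hI; exists 1; rewrite scale1r.
have [a Ia a_neq0] : exists2 a, I a & a != 0.
  apply: NNPP => I_eq0; apply: x_neq0.
  have [|m0 ->] := idealmul_divisible (q := 0) _ Ix; last by rewrite scale0r.
  move=> a Ia; exists 0; rewrite mulr0; apply/eqP/negPn/negP => a_neq0.
  by apply: I_eq0; exists a.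
have [n [u [aE u_unit]]] := DVD_expr_unit a_neq0.
have [m'' mE] := divisible_expr pM n m.
apply/nxm/hI; rewrite mE -[p ^+ n](mulrK u_unit) -aE -scalerA.
exact: idealmul_scale.
Qed.

End DVD.

Section Quotient.
Context {A B : comNzRingType} {f : {rmorphism A -> B}}.
Context {S : lmodType A} {T : lmodType B} {K : S -> Prop} {proj : S -> T}.
Hypothesis hq : quotient_presentation f S T K proj.

Lemma quotient_projD : {morph proj : x y / x + y}.
Proof. by case: hq. Qed.

Lemma quotient_surj t : exists x, proj x = t.
Proof. by case: hq. Qed.

Lemma quotient_ker x : proj x = 0 <-> K x.
Proof. by case: hq. Qed.

Lemma quotient_projZ a x : proj (a *: x) = f a *: proj x.
Proof. by case: hq. Qed.

Lemma quotient_proj0 : proj 0 = 0.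
Proof. by apply/(addrI (proj 0)); rewrite -quotient_projD !addr0. Qed.

Lemma quotient_projB x y : proj (x - y) = proj x - proj y.
Proof.
rewrite quotient_projD; congr (_ + _).
by apply/(addrI (proj y)); rewrite -quotient_projD !subrr quotient_proj0.
Qed.

Lemma quotient_proj_sum n (F : 'I_n -> S) : proj (\sum_i F i) = \sum_i proj (F i).
Proof. exact: (big_morph proj quotient_projD quotient_proj0). Qed.

Lemma quotient_idealmul (J : A -> Prop) x :
  idealmul J x -> idealmul (fun b => exists2 a, J a & f a = b) (proj x).
Proof.
case=> n [r [m [Jr ->]]]; exists n, (f \o r), (proj \o m); split=> [i|].
  by exists (r i).
by rewrite quotient_proj_sum; apply: eq_bigr => i _; rewrite quotient_projZ.
Qed.

Lemma quotient_idealmul_lift (J : A -> Prop) t :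
  idealmul (fun b => exists2 a, J a & f a = b) t -> exists2 x, idealmul J x & proj x = t.
Proof.
case=> n [r [m [Jr ->]]].
have lift i : exists am : A * S, [/\ J am.1, f am.1 = r i & proj am.2 = m i].
  by have [a Ja ra] := Jr i; have [x mx] := quotient_surj (m i); exists (a, x).
have [g hg] := functional_choice _ lift.
exists (\sum_i (g i).1 *: (g i).2).
  by exists n, (fun i => (g i).1), (fun i => (g i).2); split=> // i; case: (hg i).
rewrite quotient_proj_sum; apply: eq_bigr => i _.
by case: (hg i) => _ <- <-; rewrite quotient_projZ.
Qed.

Lemma quotient_pap_multiplication :
  (forall b, exists a, f a = b) ->
  pap_multiplication_module A S -> pap_multiplication_module B T.
Proof.
move=> f_surj S_pap N [[[N0 ND NZ] [t Nt]] N_2ap].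
pose N' x := N (proj x).
have colonE a : colon N' a <-> colon N (f a).
  split=> [Na t'|Na x]; last by rewrite /N' quotient_projZ.
  by have [x <-] := quotient_surj t'; have := Na x; rewrite /N' quotient_projZ.
have N'_pap : pseudo_absorbing_primary N'.
  split; last exact: two_absorbing_primary_preimage colonE N_2ap.
  split; first split=> [|x y|r x]; rewrite /N'.
  - by rewrite quotient_proj0.
  - by rewrite quotient_projD; apply: ND.
  - by rewrite quotient_projZ; apply: NZ.
  - by have [x xt] := quotient_surj t; exists x; rewrite /N' xt.
have [I [I_ideal hI]] := S_pap N' N'_pap.
exists (fun b => exists2 a, I a & f a = b); split; first exact: is_ideal_image.
move=> t'; split=> [|/quotient_idealmul_lift[x /hI Nx <-] //].
by have [x <-] := quotient_surj t' => /(hI x)/quotient_idealmul.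
Qed.

End Quotient.

Lemma exists_nondivisible {S : zmodType} {A1 A2 : comNzRingType}
    {T1 : lmodType A1} {T2 : lmodType A2} { pi1 : S -> T1 } { pi2 : S -> T2 }
    {q1 : A1} {q2 : A2} :
  (forall t, exists x, pi1 x = t) -> (forall t, exists x, pi2 x = t) ->
  (forall x, pi1 x = 0 -> pi2 x = 0 -> x = 0) ->
  (forall x, pi1 x = 0 -> divisible q2 (pi2 x)) ->
  ((forall t : T1, divisible q1 t) -> forall t : T1, t = 0) ->
  ((forall t : T2, divisible q2 t) -> forall t : T2, t = 0) ->
  (exists s : S, s != 0) -> exists a, ~ divisible q1 (pi1 a).
Proof.
move=> pi1_surj pi2_surj pi_ker_eq0 pi2_div T1_eq0 T2_eq0 [s /eqP s_neq0].
apply: NNPP => all_div; apply: s_neq0.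
have T1_0 : forall t : T1, t = 0.
  apply: T1_eq0 => t; have [x <-] := pi1_surj t.
  by apply: NNPP => nx; apply: all_div; exists x.
have T2_0 : forall t : T2, t = 0.
  by apply: T2_eq0 => t; have [x <-] := pi2_surj t; apply: pi2_div.
by apply: pi_ker_eq0; [apply: T1_0 | apply: T2_0].
Qed.

Section Pullback.
Context {R1 R2 : comNzRingType} {F : fieldType}.
Context {V1 : {rmorphism R1 -> F}} {V2 : {rmorphism R2 -> F}}.

Definition pb_fst : {rmorphism pullback V1 V2 -> R1} := fst \o val.
Definition pb_snd : {rmorphism pullback V1 V2 -> R2} := snd \o val.

Lemma pullbackP (r : pullback V1 V2) : V1 (pb_fst r) = V2 (pb_snd r).
Proof. exact/eqP/(valP r). Qed.

Lemma pullback_mk {r1 : R1} {r2 : R2} :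
  V1 r1 = V2 r2 -> exists r : pullback V1 V2, pb_fst r = r1 /\ pb_snd r = r2.
Proof.
move=> e; have r12 : (r1, r2) \in pb_pred V1 V2 by apply/eqP.
by exists (Pullback r12).
Qed.

Lemma pb_fst_surj : (forall y, exists x, V2 x = y) -> forall r1, exists r, pb_fst r = r1.
Proof.
move=> V2_surj r1; have [r2 e] := V2_surj (V1 r1).
by have [r [r1E _]] := pullback_mk (esym e); exists r.
Qed.

Lemma pb_snd_surj : (forall y, exists x, V1 x = y) -> forall r2, exists r, pb_snd r = r2.
Proof.
move=> V1_surj r2; have [r1 e] := V1_surj (V2 r2).
by have [r [_ r2E]] := pullback_mk e; exists r.
Qed.

Context {p1 : R1} {p2 : R2} {S : lmodType (pullback V1 V2)}.
Context {S1 : lmodType R1} {S2 : lmodType R2} { pi1 : S -> S1 } { pi2 : S -> S2 }.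
Hypotheses (S_sep : separated p1 p2 S)
  (hq1 : quotient_presentation pb_fst S S1 (idealmul (O_P2 V1 V2 p2)) pi1)
  (hq2 : quotient_presentation pb_snd S S2 (idealmul (P1_0 V1 V2 p1)) pi2).

Lemma separated_ker x : pi1 x = 0 -> pi2 x = 0 -> x = 0.
Proof. by move=> /(quotient_ker hq1) x2 /(quotient_ker hq2) x1; apply: S_sep. Qed.

Lemma separated_inj x y : pi1 x = pi1 y -> pi2 x = pi2 y -> x = y.
Proof.
move=> e1 e2; apply/eqP; rewrite -subr_eq0; apply/eqP/separated_ker.
  by rewrite (quotient_projB hq1) e1 subrr.
by rewrite (quotient_projB hq2) e2 subrr.
Qed.

Lemma pi2_divisible x : pi1 x = 0 -> divisible p2 (pi2 x).
Proof.
move=> /(quotient_ker hq1)/(quotient_idealmul hq2).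
by apply: idealmul_divisible => _ [r [_ p2r] <-].
Qed.

Lemma pi1_divisible x : pi2 x = 0 -> divisible p1 (pi1 x).
Proof.
move=> /(quotient_ker hq2)/(quotient_idealmul hq1).
by apply: idealmul_divisible => _ [r [p1r _] <-].
Qed.

Lemma exists_generator :
  ((forall t : S1, divisible p1 t) -> forall t : S1, t = 0) ->
  ((forall t : S2, divisible p2 t) -> forall t : S2, t = 0) ->
  (exists s : S, s != 0) ->
  exists s0, ~ divisible p1 (pi1 s0) /\ ~ divisible p2 (pi2 s0).
Proof.
move=> S1_eq0 S2_eq0 S_neq0.
have [a a1] := exists_nondivisible (quotient_surj hq1) (quotient_surj hq2)
  separated_ker pi2_divisible S1_eq0 S2_eq0 S_neq0.
have [b b2] := exists_nondivisible (quotient_surj hq2) (quotient_surj hq1)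
  (fun x x2 x1 => separated_ker x x1 x2) pi1_divisible S2_eq0 S1_eq0 S_neq0.
have [[ma a2]|] := classic (divisible p2 (pi2 a)); last by exists a.
have [[mb b1]|] := classic (divisible p1 (pi1 b)); last by exists b.
exists (a + b); split=> -[m abm].
  by apply: a1; exists (m - mb); rewrite scalerBr -abm -b1 (quotient_projD hq1) addrK.
by apply: b2; exists (m - ma); rewrite scalerBr -abm -a2 (quotient_projD hq2) addrC addKr.
Qed.

Lemma pullback_cyclic s0 :
  (forall y, exists x, V2 x = y) -> V2 p2 = 0 ->
  (forall t, cyclic_span (pi1 s0) t) -> (forall t, cyclic_span (pi2 s0) t) ->
  forall x, cyclic_span s0 x.
Proof.
move=> V2_surj V2p2 gen1 gen2 x.
have [r1 x1] := gen1 (pi1 x); have [r r1E] := pb_fst_surj V2_surj r1.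
have [|m xm] := pi2_divisible (x - r *: s0).
  by rewrite (quotient_projB hq1) (quotient_projZ hq1) r1E x1 subrr.
have [e me] := gen2 m.
(* [p2 * e] lies in the kernel of [V2], so it may be added to the second
   coordinate without leaving the pullback. *)
have [r' [r'1 r'2]] : exists r', pb_fst r' = r1 /\ pb_snd r' = pb_snd r + p2 * e.
  by apply: pullback_mk; rewrite rmorphD rmorphM V2p2 mul0r addr0 -pullbackP r1E.
exists r'; apply: separated_inj; first by rewrite (quotient_projZ hq1) r'1.
rewrite (quotient_projZ hq2) r'2 scalerDl -scalerA -me -xm (quotient_projB hq2).
by rewrite (quotient_projZ hq2) addrC subrK.
Qed.

End Pullback.

Theorem theorem3p2
  (R1 R2 : idomainType) (Rbar : fieldType) (p1 : R1) (p2 : R2)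
  (V1 : {rmorphism R1 -> Rbar}) (V2 : {rmorphism R2 -> Rbar})
  (S : lmodType (pullback V1 V2)) (S1 : lmodType R1) (S2 : lmodType R2)
  (pi1 : S -> S1) (pi2 : S -> S2) :
  is_DVD R1 -> maximal_ideal (principal p1) ->
  is_DVD R2 -> maximal_ideal (principal p2) ->
  (forall y, exists x, V1 x = y) -> (forall y, exists x, V2 x = y) ->
  (forall x, V1 x = 0 <-> principal p1 x) ->
  (forall x, V2 x = 0 <-> principal p2 x) ->
  (exists s : S, s != 0) ->
  separated p1 p2 S ->
  (* S1 = S / P2 S  and  S2 = S / P1 S *)
  quotient_presentation (fun r : pullback V1 V2 => (pbval r).1) S S1
    (idealmul (O_P2 V1 V2 p2)) pi1 ->
  quotient_presentation (fun r : pullback V1 V2 => (pbval r).2) S S2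
    (idealmul (P1_0 V1 V2 p1)) pi2 ->
  (pap_multiplication_module (pullback V1 V2) S <->
     pap_multiplication_module R1 S1 /\ pap_multiplication_module R2 S2).
Proof.
move=> R1_DVD p1_max R2_DVD p2_max V1_surj V2_surj _ V2_ker S_neq0 S_sep hq1 hq2.
split=> [S_pap|[S1_pap S2_pap]].
  split.
    exact: (quotient_pap_multiplication (f := pb_fst) hq1 (pb_fst_surj V2_surj) S_pap).
  exact: (quotient_pap_multiplication (f := pb_snd) hq2 (pb_snd_surj V1_surj) S_pap).
have [s0 [s01 s02]] := exists_generator S_sep hq1 hq2
  (DVD_pap_divisible_eq0 R1_DVD p1_max S1_pap)
  (DVD_pap_divisible_eq0 R2_DVD p2_max S2_pap) S_neq0.
apply: (cyclic_pap_multiplication s0).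
apply: (pullback_cyclic S_sep hq1 hq2 s0 V2_surj).
- by apply/V2_ker/principal_refl.
- exact: (DVD_pap_cyclic R1_DVD p1_max (pi1 s0) S1_pap s01).
- exact: (DVD_pap_cyclic R2_DVD p2_max (pi2 s0) S2_pap s02).
Qed.
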